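(* In $\lambda_{\mathrm{ch}}$: if $\Gamma ; \Delta \vdash \mathcal{C}$ with $\Delta = a_1 : A_1, \ldots, a_k : A_k$, then there exists a configuration $\mathcal{C}' \equiv \mathcal{C}$ such that $\mathcal{C}' = (\nu a_{k+1}) \ldots (\nu a_n)(M_1 \parallel \ldots \parallel M_m \parallel a_1(\vec V_1) \parallel \ldots \parallel a_n(\vec V_n))$ for some computations $M_1,\ldots,M_m$ and value sequences $\vec V_1,\ldots,\vec V_n$.
   Context: The calculus $\lambda_{\mathrm{ch}}$. Types $A,B ::= \mathbf{1} \mid A \to B \mid \mathsf{Chan}(A)$; values $V,W ::= \alpha \mid \lambda x.M \mid ()$ ($\alpha$ a variable or a name); computations $M,N ::= V\,W \mid \mathbf{let}\ x \Leftarrow M\ \mathbf{in}\ N \mid \mathbf{return}\ V \mid \mathbf{fork}\ M \mid \mathbf{give}\ V\ W \mid \mathbf{take}\ V \mid \mathbf{newCh}$, with term typing $\Gamma\vdash M:A$ (simple typing of the functional part; $\mathbf{give}\ V\ W:\mathbf 1$ for $V:A$, $W:\mathsf{Chan}(A)$; $\mathbf{take}\ V:A$ for $V:\mathsf{Chan}(A)$; $\mathbf{fork}\ M:\mathbf 1$ for $M:\mathbf 1$; $\mathbf{newCh}:\mathsf{Chan}(A)$). Configurations $\mathcal{C},\mathcal{D} ::= \mathcal{C} \parallel \mathcal{D} \mid (\nu a)\mathcal{C} \mid a(\vec V) \mid M$, where $a(\vec V)$ is a buffer named $a$ holding a (possibly empty) sequence of values. Configuration typing $\Gamma;\Delta\vdash\mathcal{C}$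 ($\Delta$ a linear environment mapping names to types): (Par) $\Gamma;\Delta_1\vdash\mathcal{C}_1$ and $\Gamma;\Delta_2\vdash\mathcal{C}_2$ give $\Gamma;\Delta_1,\Delta_2\vdash\mathcal{C}_1\parallel\mathcal{C}_2$ (disjoint split); (Chan) $\Gamma,a:\mathsf{Chan}(A);\Delta,a:A\vdash\mathcal{C}$ gives $\Gamma;\Delta\vdash(\nu a)\mathcal{C}$; (Buf) $\Gamma\vdash V_i:A$ for all $i$ gives $\Gamma;a:A\vdash a(\vec V)$; (Term) $\Gamma\vdash M:\mathbf 1$ gives $\Gamma;\cdot\vdash M$. Structural congruence $\equiv$: least congruence closed under configuration contexts $G ::= [\,] \mid G\parallel\mathcal{C}\mid(\nu a)G$, with commutativity and associativity of $\parallel$ and scope extrusion $\mathcal{C}\parallel(\nu a)\mathcal{D}\equiv(\nu a)(\mathcal{C}\parallel\mathcal{D})$ if $a\notin\mathsf{fv}(\mathcal{C})$. *)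

(* Binding is represented with de Bruijn indices:
   - term variables (bound by lambda and let) are de Bruijn indices into the
     list Gamma_v;
   - names (bound by (nu a) in configurations) are de Bruijn indices; the
     innermost enclosing (nu) binds name 0.
   Hence configurations are identified up to alpha-equivalence, and the
   side condition "a notin fv(C)" of scope extrusion is realised by shifting
   the free names of C. *)
From Stdlib Require Import List Arith.
Import ListNotations.

Inductive ty : Type :=
| TUnit : ty
| TArr : ty -> ty -> ty
| TChan : ty -> ty.

Inductive val : Type :=
| VVar : nat -> val
| VName : nat -> val
| VLam : comp -> val         (* lambda x. M ; binds variable 0 in M *)
| VUnit : val
with comp : Type :=
| CApp : val -> val -> comp
| CLet : comp -> comp -> comp   (* let x <= M in N ; binds variable 0 in N *)
| CReturn : val -> comp
| CFork : comp -> comp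
| CGive : val -> val -> comp
| CTake : val -> comp
| CNewCh : comp.

Inductive config : Type :=
| CPar : config -> config -> config
| CNu : config -> config
| CBuf : nat -> list val -> config
| CTerm : comp -> config.

(* Gamma = (variable part, name part); the name part maps
   names to their (channel) types.  Linear environments Delta map names to
   buffer payload types; they are partial maps nat -> option ty. *)
Definition nenv := nat -> option ty.

Definition ext {T} (x : T) (f : nat -> T) : nat -> T :=
  fun i => match i with 0 => x | S j => f j end.

Definition lempty : nenv := fun _ => None.

Definition lsingle (a : nat) (A : ty) : nenv :=
  fun i => if Nat.eqb i a then Some A else None.

Definition lsplit (D D1 D2 : nenv) : Prop :=
  forall i, (D i = D1 i /\ D2 i = None) \/ (D i = D2 i /\ D1 i = None).

Inductive vtyped : list ty -> nenv -> val -> ty -> Prop :=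
| T_Var : forall G N x A, nth_error G x = Some A -> vtyped G N (VVar x) A
| T_Name : forall G N a A, N a = Some A -> vtyped G N (VName a) A
| T_Lam : forall G N M A B, ctyped (A :: G) N M B -> vtyped G N (VLam M) (TArr A B)
| T_Unit : forall G N, vtyped G N VUnit TUnit
with ctyped : list ty -> nenv -> comp -> ty -> Prop :=
| T_App : forall G N V W A B,
    vtyped G N V (TArr A B) -> vtyped G N W A -> ctyped G N (CApp V W) B
| T_Let : forall G N M M' A B,
    ctyped G N M A -> ctyped (A :: G) N M' B -> ctyped G N (CLet M M') B
| T_Return : forall G N V A, vtyped G N V A -> ctyped G N (CReturn V) A
| T_Fork : forall G N M, ctyped G N M TUnit -> ctyped G N (CFork M) TUnit
| T_Give : forall G N V W A,
    vtyped G N V A -> vtyped G N W (TChan A) -> ctyped G N (CGive V W) TUnit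
| T_Take : forall G N V A, vtyped G N V (TChan A) -> ctyped G N (CTake V) A
| T_NewCh : forall G N A, ctyped G N CNewCh (TChan A).

Inductive cfg_typed : list ty -> nenv -> nenv -> config -> Prop :=
| TC_Par : forall G N D D1 D2 C1 C2,
    lsplit D D1 D2 -> cfg_typed G N D1 C1 -> cfg_typed G N D2 C2 ->
    cfg_typed G N D (CPar C1 C2)
| TC_Chan : forall G N D A C,
    cfg_typed G (ext (Some (TChan A)) N) (ext (Some A) D) C ->
    cfg_typed G N D (CNu C)
| TC_Buf : forall G N a A Vs,
    (forall V, In V Vs -> vtyped G N V A) ->
    cfg_typed G N (lsingle a A) (CBuf a Vs)
| TC_Term : forall G N M,
    ctyped G N M TUnit -> cfg_typed G N lempty (CTerm M).

Definition shn (k a : nat) : nat := if Nat.ltb a k then a else S a.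

Fixpoint shift_val (k : nat) (V : val) : val :=
  match V with
  | VVar x => VVar x
  | VName a => VName (shn k a)
  | VLam M => VLam (shift_comp k M)
  | VUnit => VUnit
  end
with shift_comp (k : nat) (M : comp) : comp :=
  match M with
  | CApp V W => CApp (shift_val k V) (shift_val k W)
  | CLet M N => CLet (shift_comp k M) (shift_comp k N)
  | CReturn V => CReturn (shift_val k V)
  | CFork M => CFork (shift_comp k M)
  | CGive V W => CGive (shift_val k V) (shift_val k W)
  | CTake V => CTake (shift_val k V)
  | CNewCh => CNewCh
  end.

Fixpoint shift_cfg (k : nat) (C : config) : config :=
  match C with
  | CPar C1 C2 => CPar (shift_cfg k C1) (shift_cfg k C2)
  | CNu C => CNu (shift_cfg (S k) C)
  | CBuf a Vs => CBuf (shn k a) (map (shift_val k) Vs)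
  | CTerm M => CTerm (shift_comp k M)
  end.

(* Structural congruence: least congruence (w.r.t. contexts G ::= [] | G || C
   | (nu a) G) containing commutativity, associativity of || and scope
   extrusion  C || (nu a) D == (nu a)(C || D)  (a not free in C), the latter
   rendered with de Bruijn shifting. *)
Inductive scong : config -> config -> Prop :=
| SC_Refl : forall C, scong C C
| SC_Sym : forall C D, scong C D -> scong D C
| SC_Trans : forall C D E, scong C D -> scong D E -> scong C E
| SC_CtxPar : forall C D E, scong C D -> scong (CPar C E) (CPar D E)
| SC_CtxNu : forall C D, scong C D -> scong (CNu C) (CNu D)
| SC_Comm : forall C D, scong (CPar C D) (CPar D C)
| SC_Assoc : forall C D E, scong (CPar C (CPar D E)) (CPar (CPar C D) E)
| SC_Extr : forall C D, scong (CPar C (CNu D)) (CNu (CPar (shift_cfg 0 C) D)).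

Fixpoint nus (n : nat) (C : config) : config :=
  match n with 0 => C | S n' => CNu (nus n' C) end.

Fixpoint pars (c : config) (l : list config) : config :=
  match l with
  | [] => c
  | d :: l' => CPar c (pars d l')
  end.

(** By induction on the typing derivation, a configuration typed under [D] is
    congruent to a normal form: restrictions (nu)^n over a parallel composition of
    threads and buffers whose buffer names are the [n] bound names and the names of
    the domain of [D], each exactly once.  (Buf) and (Term) type a buffer and a thread
    under the singleton and the empty environment; (Chan) puts the new name into the
    environment of its body, so its buffer is already there; (Par) splits [D]
    disjointly, and two normal forms in parallel are merged by extruding both blocks
    of restrictions, which only shifts the names on the other side.  Permuting the
    components finally gives the order of the statement. *)
From Stdlib Require Import List Permutation Arith Lia FinFun.
Import ListNotations.

Lemma scong_par_r C D D' : scong D D' -> scong (CPar C D) (CPar C D').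
Proof.
  intros HD. eapply SC_Trans; [apply SC_Comm|].
  eapply SC_Trans; [apply SC_CtxPar, HD|apply SC_Comm].
Qed.

Lemma scong_par C C' D D' : scong C C' -> scong D D' -> scong (CPar C D) (CPar C' D').
Proof. intros HC HD. eapply SC_Trans; [apply SC_CtxPar, HC|apply scong_par_r, HD]. Qed.

Lemma scong_nus n C D : scong C D -> scong (nus n C) (nus n D).
Proof. intros HCD. induction n as [|n IH]; simpl; [exact HCD|apply SC_CtxNu, IH]. Qed.

Lemma nus_add m n C : nus (m + n) C = nus m (nus n C).
Proof. induction m as [|m IH]; simpl; congruence. Qed.

Lemma scong_pars_swap c d l : scong (pars c (d :: l)) (pars d (c :: l)).
Proof.
  destruct l as [|e l]; simpl; [apply SC_Comm|].
  eapply SC_Trans; [apply SC_Assoc|].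
  eapply SC_Trans; [apply SC_CtxPar, SC_Comm|apply SC_Sym, SC_Assoc].
Qed.

Lemma scong_pars_perm c l c' l' :
  Permutation (c :: l) (c' :: l') -> scong (pars c l) (pars c' l').
Proof.
  enough (H : forall L L', Permutation L L' -> forall c l c' l',
             L = c :: l -> L' = c' :: l' -> scong (pars c l) (pars c' l'))
    by (intros HP; exact (H _ _ HP _ _ _ _ eq_refl eq_refl)).
  clear c l c' l'.
  induction 1 as [|x l l' Hl IH|x y l|L L' L'' H1 IH1 H2 IH2];
    intros c0 l0 c0' l0' E E'; try discriminate.
  - injection E as <- <-. injection E' as <- <-.
    destruct l as [|d m], l' as [|d' m'].
    + apply SC_Refl.
    + now apply Permutation_nil_cons in Hl.
    + now apply Permutation_sym, Permutation_nil_cons in Hl.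
    + apply scong_par_r, (IH _ _ _ _ eq_refl eq_refl).
  - injection E as <- <-. injection E' as <- <-. apply scong_pars_swap.
  - subst L L''. destruct L' as [|d m]; [now apply Permutation_sym, Permutation_nil_cons in H1|].
    eapply SC_Trans; [apply (IH1 _ _ _ _ eq_refl eq_refl)|apply (IH2 _ _ _ _ eq_refl eq_refl)].
Qed.

Lemma scong_pars_app c l d m :
  scong (CPar (pars c l) (pars d m)) (pars c (l ++ d :: m)).
Proof.
  revert c. induction l as [|e l IH]; intros c; simpl; [apply SC_Refl|].
  eapply SC_Trans; [apply SC_Sym, SC_Assoc|apply scong_par_r, IH].
Qed.

Lemma shift_cfg_nus n k C : shift_cfg k (nus n C) = nus n (shift_cfg (n + k) C).
Proof.
  revert k. induction n as [|n IH]; intros k; simpl; [reflexivity|].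
  rewrite IH, Nat.add_succ_r. reflexivity.
Qed.

Lemma iter_shift_cfg_nus m n k C :
  Nat.iter m (shift_cfg k) (nus n C) = nus n (Nat.iter m (shift_cfg (n + k)) C).
Proof.
  symmetry. apply Nat.iter_swap_gen. intros D. symmetry. apply shift_cfg_nus.
Qed.

Lemma iter_shift_cfg_par m k C D :
  Nat.iter m (shift_cfg k) (CPar C D) =
  CPar (Nat.iter m (shift_cfg k) C) (Nat.iter m (shift_cfg k) D).
Proof. induction m as [|m IH]; simpl; [|rewrite IH]; reflexivity. Qed.

Lemma iter_shift_cfg_pars m k c l :
  Nat.iter m (shift_cfg k) (pars c l) =
  pars (Nat.iter m (shift_cfg k) c) (map (Nat.iter m (shift_cfg k)) l).
Proof.
  revert c. induction l as [|d l IH]; intros c; simpl; [reflexivity|].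
  rewrite iter_shift_cfg_par, IH. reflexivity.
Qed.

Lemma iter_shn m k a : Nat.iter m (shn k) a = if a <? k then a else a + m.
Proof.
  induction m as [|m IH]; simpl.
  - destruct (a <? k); lia.
  - rewrite IH. unfold shn.
    destruct (Nat.ltb_spec a k) as [Hak|Hak]; [now rewrite (proj2 (Nat.ltb_lt a k) Hak)|].
    destruct (Nat.ltb_spec (a + m) k); lia.
Qed.

Lemma scong_par_nus_r n C D :
  scong (CPar C (nus n D)) (nus n (CPar (Nat.iter n (shift_cfg 0) C) D)).
Proof.
  revert C. induction n as [|n IH]; intros C; simpl; [apply SC_Refl|].
  eapply SC_Trans; [apply SC_Extr|apply SC_CtxNu].
  rewrite <- Nat.iter_swap. apply IH.
Qed.

Lemma scong_par_nus_l n C D :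
  scong (CPar (nus n C) D) (nus n (CPar C (Nat.iter n (shift_cfg 0) D))).
Proof.
  eapply SC_Trans; [apply SC_Comm|].
  eapply SC_Trans; [apply scong_par_nus_r|apply scong_nus, SC_Comm].
Qed.

Lemma scong_par_nus m n C D :
  scong (CPar (nus m C) (nus n D))
        (nus (n + m) (CPar (Nat.iter n (shift_cfg m) C) (Nat.iter m (shift_cfg 0) D))).
Proof.
  eapply SC_Trans; [apply scong_par_nus_r|].
  rewrite iter_shift_cfg_nus, Nat.add_0_r, nus_add.
  apply scong_nus, scong_par_nus_l.
Qed.

Definition buffer (p : nat * list val) : config := CBuf (fst p) (snd p).

Definition shift_entry (k : nat) (p : nat * list val) : nat * list val :=
  (shn k (fst p), map (shift_val k) (snd p)).

Definition threads_buffers (Ms : list comp) (B : list (nat * list val)) : list config :=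
  map CTerm Ms ++ map buffer B.

Lemma map_iter_shift_threads_buffers m k Ms B :
  map (Nat.iter m (shift_cfg k)) (threads_buffers Ms B) =
  threads_buffers (map (Nat.iter m (shift_comp k)) Ms) (map (Nat.iter m (shift_entry k)) B).
Proof.
  unfold threads_buffers. rewrite map_app, !map_map.
  f_equal; apply map_ext; intros x; symmetry; now apply Nat.iter_swap_gen.
Qed.

Lemma threads_buffers_app Ms1 B1 Ms2 B2 :
  Permutation (threads_buffers Ms1 B1 ++ threads_buffers Ms2 B2)
              (threads_buffers (Ms1 ++ Ms2) (B1 ++ B2)).
Proof.
  unfold threads_buffers. rewrite !map_app, <- !app_assoc.
  apply Permutation_app_head, Permutation_app_swap_app.
Qed.

Lemma map_fst_iter_shift_entry m k B :
  map fst (map (Nat.iter m (shift_entry k)) B) = map (Nat.iter m (shn k)) (map fst B).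
Proof.
  rewrite !map_map. apply map_ext. intros p. now apply Nat.iter_swap_gen.
Qed.

(* Under [n] restrictions the bound names are [0 .. n-1] and a free name [a] is [a + n]. *)
Definition canonical_names (n : nat) (xs : list nat) : list nat :=
  seq 0 n ++ map (fun a => a + n) xs.

Lemma map_add_seq k s len : map (fun a => a + k) (seq s len) = seq (s + k) len.
Proof.
  revert s. induction len as [|len IH]; intros s; simpl; [reflexivity|].
  rewrite IH. reflexivity.
Qed.

Lemma canonical_names_succ n xs :
  canonical_names n (0 :: map S xs) = canonical_names (S n) xs.
Proof.
  unfold canonical_names. rewrite seq_S, <- app_assoc. simpl. rewrite map_map.
  do 2 f_equal. apply map_ext. intros a. lia.
Qed.

Lemma canonical_names_par n1 n2 xs1 xs2 :
  Permutation (map (Nat.iter n2 (shn n1)) (canonical_names n1 xs1) ++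
               map (Nat.iter n1 (shn 0)) (canonical_names n2 xs2))
              (canonical_names (n2 + n1) (xs1 ++ xs2)).
Proof.
  unfold canonical_names.
  assert (Hbound : map (Nat.iter n2 (shn n1)) (seq 0 n1) = seq 0 n1).
  { rewrite <- map_id. apply map_ext_in. intros a Ha. apply in_seq in Ha.
    rewrite iter_shn. destruct (Nat.ltb_spec a n1); lia. }
  assert (Hshift : forall m k, map (Nat.iter m (shn 0)) (seq 0 k) = seq m k).
  { intros m k. change (seq m k) with (seq (0 + m) k). rewrite <- map_add_seq.
    apply map_ext. intros a. rewrite iter_shn. reflexivity. }
  rewrite !map_app, !map_map, Hbound, Hshift, (Nat.add_comm n2 n1), seq_app.
  rewrite <- !app_assoc. apply Permutation_app_head.
  eapply Permutation_trans; [apply Permutation_app_swap_app|].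
  apply Permutation_app_head, Permutation_refl'.
  f_equal; apply map_ext; intros a; rewrite iter_shn.
  - destruct (Nat.ltb_spec (a + n1) n1); lia.
  - destruct (Nat.ltb_spec (a + n2) 0); lia.
Qed.

Definition enumerates (xs : list nat) (D : nenv) : Prop :=
  NoDup xs /\ forall a, In a xs <-> D a <> None.

Lemma enumerates_lempty xs : enumerates xs lempty -> xs = [].
Proof.
  intros [_ Hxs]. destruct xs as [|a xs]; [reflexivity|].
  exfalso. apply (Hxs a); [left|]; reflexivity.
Qed.

Lemma enumerates_lsingle xs a A : enumerates xs (lsingle a A) -> Permutation xs [a].
Proof.
  intros [Hnd Hxs]. apply NoDup_Permutation; [exact Hnd|repeat constructor; easy|].
  intros x. rewrite Hxs. unfold lsingle. simpl.
  destruct (Nat.eqb_spec x a); intuition congruence.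
Qed.

Lemma enumerates_ext xs A D :
  enumerates xs D -> enumerates (0 :: map S xs) (ext (Some A) D).
Proof.
  intros [Hnd Hxs]. split.
  - constructor.
    + intros H0. apply in_map_iff in H0 as (a & Ha & _). discriminate.
    + apply Injective_map_NoDup; [intros x y; lia|exact Hnd].
  - intros [|a]; simpl; [intuition discriminate|].
    rewrite <- Hxs, in_map_iff. split; [|eauto].
    intros [? | (b & Hb & Hin)]; [discriminate|]. injection Hb as ->. exact Hin.
Qed.

Lemma Permutation_filter_negb {T} (f : T -> bool) l :
  Permutation l (filter f l ++ filter (fun x => negb (f x)) l).
Proof.
  induction l as [|x l IH]; simpl; [constructor|].
  destruct (f x); simpl; [apply perm_skip, IH|apply Permutation_cons_app, IH].
Qed.

Lemma enumerates_lsplit xs D D1 D2 :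
  lsplit D D1 D2 -> enumerates xs D ->
  exists xs1 xs2, enumerates xs1 D1 /\ enumerates xs2 D2 /\ Permutation xs (xs1 ++ xs2).
Proof.
  intros Hsplit [Hnd Hxs].
  set (in1 := fun a => match D1 a with Some _ => true | None => false end).
  exists (filter in1 xs), (filter (fun a => negb (in1 a)) xs).
  split; [|split]; [split..|apply Permutation_filter_negb];
    try apply NoDup_filter, Hnd;
    intros a; rewrite filter_In, Hxs; unfold in1;
    destruct (Hsplit a) as [[-> HD2] | [-> HD1]]; rewrite ?HD1, ?HD2;
    destruct (D1 a), (D2 a); simpl; intuition congruence.
Qed.

Definition normal_form (C : config) (xs : list nat) : Prop :=
  exists n Ms B c l,
    Permutation (c :: l) (threads_buffers Ms B) /\
    Permutation (map fst B) (canonical_names n xs) /\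
    scong (nus n (pars c l)) C.

Lemma normal_form_perm C xs xs' :
  Permutation xs xs' -> normal_form C xs -> normal_form C xs'.
Proof.
  intros Hxs (n & Ms & B & c & l & HL & HB & HC).
  exists n, Ms, B, c, l. split; [exact HL|split; [|exact HC]].
  eapply Permutation_trans; [exact HB|].
  apply Permutation_app_head, Permutation_map, Hxs.
Qed.

Lemma normal_form_term M : normal_form (CTerm M) [].
Proof.
  exists 0, [M], [], (CTerm M), [].
  repeat split; [apply Permutation_refl..|apply SC_Refl].
Qed.

Lemma normal_form_buf a Vs : normal_form (CBuf a Vs) [a].
Proof.
  exists 0, [], [(a, Vs)], (CBuf a Vs), [].
  repeat split; [apply Permutation_refl| |apply SC_Refl].
  unfold canonical_names. simpl. rewrite Nat.add_0_r. apply Permutation_refl.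
Qed.

Lemma normal_form_nu C xs : normal_form C (0 :: map S xs) -> normal_form (CNu C) xs.
Proof.
  intros (n & Ms & B & c & l & HL & HB & HC).
  exists (S n), Ms, B, c, l. rewrite <- canonical_names_succ.
  repeat split; [exact HL|exact HB|apply SC_CtxNu, HC].
Qed.

Lemma normal_form_par C1 C2 xs1 xs2 :
  normal_form C1 xs1 -> normal_form C2 xs2 -> normal_form (CPar C1 C2) (xs1 ++ xs2).
Proof.
  intros (n1 & Ms1 & B1 & c1 & l1 & HL1 & HB1 & HC1)
         (n2 & Ms2 & B2 & c2 & l2 & HL2 & HB2 & HC2).
  set (f1 := Nat.iter n2 (shift_cfg n1)). set (f2 := Nat.iter n1 (shift_cfg 0)).
  exists (n2 + n1),
    (map (Nat.iter n2 (shift_comp n1)) Ms1 ++ map (Nat.iter n1 (shift_comp 0)) Ms2),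
    (map (Nat.iter n2 (shift_entry n1)) B1 ++ map (Nat.iter n1 (shift_entry 0)) B2),
    (f1 c1), (map f1 l1 ++ f2 c2 :: map f2 l2).
  split; [|split].
  - change (f1 c1 :: map f1 l1 ++ f2 c2 :: map f2 l2)
      with (map f1 (c1 :: l1) ++ map f2 (c2 :: l2)).
    eapply Permutation_trans;
      [apply Permutation_app; apply Permutation_map; [exact HL1|exact HL2]|].
    unfold f1, f2. rewrite !map_iter_shift_threads_buffers. apply threads_buffers_app.
  - rewrite map_app, !map_fst_iter_shift_entry.
    eapply Permutation_trans; [|apply canonical_names_par].
    apply Permutation_app; apply Permutation_map; assumption.
  - eapply SC_Trans; [apply scong_nus, SC_Sym, scong_pars_app|].
    unfold f1, f2. rewrite <- !iter_shift_cfg_pars.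
    eapply SC_Trans; [apply SC_Sym, scong_par_nus|apply scong_par; assumption].
Qed.

Lemma typed_normal_form G N D C xs :
  cfg_typed G N D C -> enumerates xs D -> normal_form C xs.
Proof.
  intros HC. revert xs. induction HC as [G N D D1 D2 C1 C2 Hsplit _ IH1 _ IH2| | |];
    intros xs Hxs.
  - destruct (enumerates_lsplit _ _ _ _ Hsplit Hxs) as (xs1 & xs2 & Hxs1 & Hxs2 & Hperm).
    apply normal_form_perm with (xs1 ++ xs2); [now apply Permutation_sym|].
    apply normal_form_par; [apply IH1, Hxs1|apply IH2, Hxs2].
  - apply normal_form_nu, IHHC, enumerates_ext, Hxs.
  - apply normal_form_perm with [a]; [|apply normal_form_buf].
    apply Permutation_sym. eapply enumerates_lsingle. exact Hxs.
  - rewrite (enumerates_lempty _ Hxs). apply normal_form_term.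
Qed.

Lemma combine_map_fst_snd {A V} (l : list (A * V)) : combine (map fst l) (map snd l) = l.
Proof. induction l as [|[a v] l IH]; simpl; congruence. Qed.

Lemma combine_app {A V} (X1 X2 : list A) (V1 V2 : list V) :
  length X1 = length V1 -> combine (X1 ++ X2) (V1 ++ V2) = combine X1 V1 ++ combine X2 V2.
Proof.
  revert V1. induction X1 as [|x X1 IH]; intros [|v V1] Hlen; simpl in *;
    try discriminate; [reflexivity|].
  rewrite IH by congruence. reflexivity.
Qed.

Lemma combine_map_l {A A' V} (g : A -> A') (X : list A) (Vs : list V) :
  combine (map g X) Vs = map (fun p => (g (fst p), snd p)) (combine X Vs).
Proof.
  revert Vs. induction X as [|x X IH]; intros [|v Vs]; simpl; congruence.
Qed.

Lemma Permutation_fst_combine {A V} (B : list (A * V)) X1 X2 :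
  Permutation (map fst B) (X1 ++ X2) ->
  exists V1 V2, length V1 = length X1 /\ length V2 = length X2 /\
    Permutation B (combine X1 V1 ++ combine X2 V2).
Proof.
  intros HB. apply Permutation_sym, Permutation_map_inv in HB as (B' & HX & HB).
  assert (Hlen : length (X1 ++ X2) = length (map snd B'))
    by (rewrite HX, !length_map; reflexivity).
  exists (firstn (length X1) (map snd B')), (skipn (length X1) (map snd B')).
  rewrite length_firstn, length_skipn, <- Hlen, length_app.
  repeat split; [lia|lia|].
  rewrite <- combine_app by (rewrite length_firstn, <- Hlen, length_app; lia).
  rewrite firstn_skipn, HX, combine_map_fst_snd. exact HB.
Qed.

Lemma scong_nus_pars_perm n c l T C :
  Permutation (c :: l) T -> scong (nus n (pars c l)) C ->
  exists c' l', c' :: l' = T /\ scong (nus n (pars c' l')) C.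
Proof.
  destruct T as [|c' l']; intros HT HC; [now apply Permutation_sym, Permutation_nil_cons in HT|].
  exists c', l'. split; [reflexivity|].
  eapply SC_Trans; [|exact HC]. apply scong_nus, scong_pars_perm, Permutation_sym, HT.
Qed.

Theorem lemma6 :
  forall (G : list ty) (N D : nenv) (C : config) (as_ : list nat),
    cfg_typed G N D C ->
    NoDup as_ ->
    (forall a, In a as_ <-> D a <> None) ->
    exists (n' : nat) (Ms : list comp) (Vfree : list (list val))
           (Vbound : list (list val)) (c : config) (l : list config),
      length Vfree = length as_ /\
      length Vbound = n' /\
      c :: l = map CTerm Ms
               ++ map (fun p => CBuf (fst p + n') (snd p)) (combine as_ Vfree)
               ++ map (fun p => CBuf (fst p) (snd p)) (combine (rev (seq 0 n')) Vbound) /\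
      scong (nus n' (pars c l)) C.
Proof.
  intros G N D C as_ HC Hnd Has.
  destruct (typed_normal_form G N D C as_ HC (conj Hnd Has))
    as (n & Ms & B & c & l & HL & HB & HS).
  assert (HB' : Permutation (map fst B) (map (fun a => a + n) as_ ++ rev (seq 0 n))).
  { eapply Permutation_trans; [exact HB|].
    eapply Permutation_trans; [apply Permutation_app_comm|].
    apply Permutation_app_head, Permutation_rev. }
  destruct (Permutation_fst_combine B _ _ HB') as (Vfree & Vbound & Hfree & Hbound & HBV).
  rewrite length_map in Hfree. rewrite length_rev, length_seq in Hbound.
  assert (HT : Permutation (c :: l)
    (map CTerm Ms ++ map (fun p => CBuf (fst p + n) (snd p)) (combine as_ Vfree)
                  ++ map buffer (combine (rev (seq 0 n)) Vbound))).
  { eapply Permutation_trans; [exact HL|]. apply Permutation_app_head.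
    eapply Permutation_trans; [apply Permutation_map, HBV|].
    rewrite map_app, combine_map_l, map_map. apply Permutation_refl. }
  destruct (scong_nus_pars_perm n c l _ C HT HS) as (c' & l' & Heq & HS').
  exists n, Ms, Vfree, Vbound, c', l'. auto.
Qed.
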